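(* Let $\mathcal{M}$ be a nontrivial, unbounded graph matroid family with dimensionality $d$, threshold $t$ and rank function $r$. Let $r_0=r(K_t)-d\cdot t$, let $\varepsilon=\frac{1}{6d}$, and let $\delta$ be a positive integer with $\delta\ge\max(6r_0,t)$ such that every graph with minimum degree at least $\delta$ has a $d$-dominating set of size at most $\varepsilon|V(G)|$. If $G=(V,E)$ is a graph with minimum degree at least $\delta$, then there is a vertex $v_0\in V$ such that $r(G)\le r(G-v_0)+d$.
   Context: All graphs are finite and simple and have no isolated vertices. A graph matroid family $\mathcal{M}$ assigns to every graph $G$ a matroid $\mathcal{M}(G)$ on $E(G)$ such that (i) every graph isomorphism $V(G)\to V(H)$ induces an isomorphism $\mathcal{M}(G)\to\mathcal{M}(H)$, and (ii) for every subgraph $H$ of $G$, $\mathcal{M}(H)$ is the restriction of $\mathcal{M}(G)$ to $E(H)$. $r(G)$ is the rank of $\mathcal{M}(G)$. $\mathcal{M}$ is nontrivial if some graph $G$ has $r(G)<|E(G)|$, unbounded if $r(K_n)$ is unbounded. An $\mathcal{M}$-circuit is a graph $C$ with $r(C)<|E(C)|$ and $r(C-e)=|E(C)|-1$ for all edges $e$. Dimensionality $d$: minimum over $\mathcal{M}$-circuits of (minimum degree $-1$); threshold $t$: minimum of $|V(C)|-1$ over $\mathcal{M}$-circuits $C$ of minimum degree $d+1$. A set $U\subseteq V(G)$ is $d$-dominating in $G$ if every vertex of $V(G)\setminus U$ has at least $d$ neighbours in $U$. *)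

From HB Require Import structures.
From mathcomp Require Import all_boot all_order all_algebra.
From mathcomp Require Import finmap.
Set Implicit Arguments. Unset Strict Implicit. Unset Printing Implicit Defensive.
Import Order.TTheory GRing.Theory Num.Theory.
Local Open Scope fset_scope.

(* An edge {u,v} (u <> v) is stored in normal
   form as the pair (min u v, max u v).  A (simple, finite) graph without
   isolated vertices is a finite set of such normalized pairs; its vertex
   set is the set of endpoints of its edges. *)
Definition edge := (nat * nat)%type.
Definition graph := {fset edge}.

Definition mk_edge (u v : nat) : edge := (minn u v, maxn u v).

Definition is_graph (G : graph) : bool := [forall p : G, (val p).1 < (val p).2].

Definition verts (G : graph) : {fset nat} :=
  [fset p.1 | p in G] `|` [fset p.2 | p in G].

Definition incident (v : nat) (p : edge) : bool := (p.1 == v) || (p.2 == v).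

Definition deg (G : graph) (v : nat) : nat := #|` [fset p in G | incident v p]|.

Definition is_mindeg (G : graph) (k : nat) : Prop :=
  (exists2 v, v \in verts G & deg G v = k) /\
  (forall v, v \in verts G -> k <= deg G v).

Definition mindeg_ge (G : graph) (k : nat) : Prop :=
  forall v, v \in verts G -> k <= deg G v.

Definition del_vertex (G : graph) (v : nat) : graph :=
  [fset p in G | ~~ incident v p].

Definition map_graph (f : nat -> nat) (G : graph) : graph :=
  [fset mk_edge (f p.1) (f p.2) | p in G].

Definition Kn (n : nat) : graph :=
  [fset p : edge in [seq ((i, j) : edge) | i <- iota 0 n, j <- iota 0 n] | p.1 < p.2].

Definition nbrs (G : graph) (v : nat) : {fset nat} :=
  [fset u in verts G | mk_edge u v \in G].

Definition dominating (G : graph) (d : nat) (U : {fset nat}) : Prop :=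
  U `<=` verts G /\
  forall v, v \in verts G -> v \notin U -> d <= #|` (nbrs G v `&` U)|.

Definition is_matroid (E : {fset edge}) (ind : {fset edge} -> bool) : Prop :=
  [/\ ind fset0,
      (forall A, ind A -> A `<=` E),
      (forall A B, ind B -> A `<=` B -> ind A) &
      (forall A B, ind A -> ind B -> #|` A| < #|` B| ->
         exists2 e, e \in B `\` A & ind (e |` A))].

(* A graph matroid family: M G is the independence predicate of the matroid
   M(G) on E(G). *)
Definition graph_matroid_family (M : graph -> {fset edge} -> bool) : Prop :=
  [/\ (forall G, is_graph G -> is_matroid G (M G)),
      (* (i) isomorphism invariance: every graph isomorphism V(G) -> V(H)
         is the restriction of a map f injective on V(G) with H = f(G) *)
      (forall G (f : nat -> nat), is_graph G -> {in verts G &, injective f} ->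
         forall F, F `<=` G -> M (map_graph f G) (map_graph f F) = M G F) &
      (forall G H, is_graph G -> H `<=` G ->
         forall F, M H F = M G F && (F `<=` H))].

Definition rank (M : graph -> {fset edge} -> bool) (G : graph) : nat :=
  \max_(F <- fpowerset G | M G F) #|` F|.

Definition nontrivial (M : graph -> {fset edge} -> bool) : Prop :=
  exists2 G, is_graph G & rank M G < #|` G|.

Definition unbounded (M : graph -> {fset edge} -> bool) : Prop :=
  forall b, exists n, b < rank M (Kn n).

Definition is_circuit (M : graph -> {fset edge} -> bool) (C : graph) : Prop :=
  [/\ is_graph C, rank M C < #|` C| &
      forall e, e \in C -> rank M (C `\ e) = (#|` C| - 1)%N].

Definition is_dimensionality (M : graph -> {fset edge} -> bool) (d : nat) : Prop :=
  (exists2 C, is_circuit M C & is_mindeg C d.+1) /\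
  (forall C k, is_circuit M C -> is_mindeg C k -> d.+1 <= k).

Definition is_threshold (M : graph -> {fset edge} -> bool) (d t : nat) : Prop :=
  (exists2 C, is_circuit M C /\ is_mindeg C d.+1 & #|` verts C| = t.+1) /\
  (forall C, is_circuit M C -> is_mindeg C d.+1 -> t.+1 <= #|` verts C|).

From HB Require Import structures.
From mathcomp Require Import all_boot all_order all_algebra.
From mathcomp Require Import finmap zify.
Import Order.TTheory GRing.Theory Num.Theory.
Local Open Scope fset_scope.
Set Implicit Arguments. Unset Strict Implicit.

(* Suppose every vertex v has r(G - v) + d < r(G).  Take a small d-dominating
   set U and let W be the other vertices; joining each w in W to d of its
   neighbours in U gives a forest F of stars, which is independent because
   every circuit has minimum degree at least d + 1.  Extend F to a basis B of
   M(G).  Deleting w costs at most deg_B(w) in rank, so every w in W has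
   B-degree at least d + 1; double counting the edges of B at W, where edges
   of F have only one end, gives (2d + 1)|W| <= 2 r(G).  On the other hand,
   relabelled copies of a threshold circuit show r(K_(m+1)) <= r(K_m) + d for
   m >= t, so r(G) <= r(K_n) <= r(K_t) + d (n - t).  As |W| >= (1 - 1/(6d)) n
   and 6 r_0 <= delta < n, the two bounds are incompatible. *)

(* [rank M G] is convertible to [mrank (M G) G]. *)
Definition mrank (ind : {fset edge} -> bool) (X : {fset edge}) : nat :=
  \max_(F <- fpowerset X | ind F) #|` F|.

Lemma mrank_ge (ind : {fset edge} -> bool) A X :
  ind A -> A `<=` X -> #|` A| <= mrank ind X.
Proof. by move=> iA AX; apply: leq_bigmax_seq; rewrite ?fpowersetE. Qed.

Lemma mrank_le_card (ind : {fset edge} -> bool) X : mrank ind X <= #|` X|.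
Proof.
by apply/bigmax_leqP_seq => F; rewrite fpowersetE => FX _; apply: fsubset_leq_card.
Qed.

Lemma ex_maxcard_fsubset (P : pred {fset edge}) A X : P A -> A `<=` X ->
  exists B, [/\ P B, B `<=` X & forall B', P B' -> B' `<=` X -> #|` B'| <= #|` B|].
Proof.
move=> PA AX.
pose Q k := [exists B : fpowerset X, P (val B) && (#|` val B| == k)].
have QA : Q #|` A|.
  have AX' : A \in fpowerset X by rewrite fpowersetE.
  by apply/existsP; exists [` AX']; rewrite PA eqxx.
have Qle k : Q k -> k <= #|` X|.
  case/existsP => -[B /=]; rewrite fpowersetE => BX /andP[_ /eqP <-].
  exact: fsubset_leq_card.
have [k /existsP [[B /=]]] := ex_maxnP (ex_intro Q _ QA) Qle.
rewrite fpowersetE => BX /andP[PB /eqP <-] kmax; exists B; split=> // B' PB' B'X.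
have B'X' : B' \in fpowerset X by rewrite fpowersetE.
by apply: kmax; apply/existsP; exists [` B'X']; rewrite PB' eqxx.
Qed.

Section MatroidRank.
Variables (E : {fset edge}) (ind : {fset edge} -> bool).
Hypothesis matroid_ind : is_matroid E ind.

Lemma indepS A B : ind B -> A `<=` B -> ind A.
Proof. by case: matroid_ind => _ _ + _; apply. Qed.

Lemma indep_augment A B : ind A -> ind B -> #|` A| < #|` B| ->
  exists2 e, e \in B `\` A & ind (e |` A).
Proof. by case: matroid_ind => _ _ _; apply. Qed.

Lemma mrank_basis X : exists B, [/\ ind B, B `<=` X & #|` B| = mrank ind X].
Proof.
have [i0 _ _ _] := matroid_ind.
have [B [iB BX Bmax]] := ex_maxcard_fsubset i0 (fsub0set X).
exists B; split=> //; apply/eqP; rewrite eqn_leq mrank_ge //=.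
by apply/bigmax_leqP_seq => F; rewrite fpowersetE => FX iF; apply: Bmax.
Qed.

Lemma indep_extend A X : ind A -> A `<=` X ->
  exists B, [/\ A `<=` B, ind B, B `<=` X & #|` B| = mrank ind X].
Proof.
move=> iA AX; pose P B := (A `<=` B) && ind B.
have PA : P A by rewrite /P fsubset_refl.
have [B [/andP[AB iB] BX Bmax]] := ex_maxcard_fsubset PA AX.
exists B; split=> //; apply/eqP; rewrite eqn_leq mrank_ge //= leqNgt.
apply/negP => ltB; have [B0 [iB0 B0X cB0]] := mrank_basis X; rewrite -cB0 in ltB.
have [e /fsetDP [eB0 eB] ieB] := indep_augment iB iB0 ltB.
have AeB : A `<=` e |` B := fsubset_trans AB (fsubsetU1 _ _).
have eBX : e |` B `<=` X by rewrite fsubUset fsub1set (fsubsetP B0X) // BX.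
by have := Bmax _ (introT andP (conj AeB ieB)) eBX; rewrite cardfsU1 eB add1n ltnn.
Qed.

Lemma mrankU_le X D : mrank ind (X `|` D) <= mrank ind X + #|` D|.
Proof.
have [B [iB BXD <-]] := mrank_basis (X `|` D).
have le1 : #|` B `&` X| <= mrank ind X.
  by apply: mrank_ge; [apply: indepS iB _; apply: fsubsetIl | apply: fsubsetIr].
have le2 : #|` B `\` X| <= #|` D|.
  apply: fsubset_leq_card; apply/fsubsetP => x /fsetDP [xB xX].
  by move: (fsubsetP BXD x xB); rewrite in_fsetU (negbTE xX).
by have := cardfsID X B; lia.
Qed.

(* Z witnesses that e lies in the closure of Y. *)
Lemma basis_fset1U_dep Y Z e B : Z `<=` e |` Y -> ~~ ind Z -> ind (Z `\ e) ->
  ind B -> B `<=` Y -> #|` B| = mrank ind Y -> e \notin B -> ~~ ind (e |` B).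
Proof.
move=> ZY nZ iZe iB BY cB eB; apply/negP => ieB.
have ZeY : Z `\ e `<=` Y.
  apply/fsubsetP => x /fsetD1P [xe xZ].
  by move: (fsubsetP ZY x xZ); rewrite in_fset1U (negbTE xe).
have [B' [ZeB' iB' B'Y cB']] := indep_extend iZe ZeY.
have lt : #|` B'| < #|` e |` B| by rewrite cardfsU1 eB cB' -cB.
have [g /fsetDP [geB gB'] igB'] := indep_augment iB' ieB lt.
case/fset1UP: geB => [ge | gB].
  apply: (negP nZ); apply: (indepS igB'); apply/fsubsetP => x xZ.
  rewrite in_fset1U ge; case: eqP => //= /eqP xe.
  by apply: (fsubsetP ZeB'); apply/fsetD1P.
have gB'Y : g |` B' `<=` Y by rewrite fsubUset fsub1set (fsubsetP BY) // B'Y.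
by have := mrank_ge igB' gB'Y; rewrite cardfsU1 gB' cB' add1n ltnn.
Qed.

Lemma mrank_le_span X Y : Y `<=` X ->
  (forall e, e \in X `\` Y -> exists Z, [/\ Z `<=` e |` Y, ~~ ind Z & ind (Z `\ e)]) ->
  mrank ind X <= mrank ind Y.
Proof.
move=> YX span; have [B0 [iB0 B0Y cB0]] := mrank_basis Y.
have [B [B0B iB BX <-]] := indep_extend iB0 (fsubset_trans B0Y YX).
rewrite -cB0 leqNgt; apply/negP => ltB.
have [e /fsetDP [eB eB0] ieB0] := indep_augment iB0 iB ltB.
have eY : e \notin Y.
  apply/negP => eY; have eB0Y : e |` B0 `<=` Y by rewrite fsubUset fsub1set eY B0Y.
  by have := mrank_ge ieB0 eB0Y; rewrite cardfsU1 eB0 cB0 add1n ltnn.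
have eXY : e \in X `\` Y by rewrite in_fsetD eY (fsubsetP BX e eB).
have [Z [ZY nZ iZe]] := span e eXY.
by have := basis_fset1U_dep ZY nZ iZe iB0 B0Y cB0 eB0; rewrite ieB0.
Qed.

End MatroidRank.

Lemma is_graphP G : reflect (forall p, p \in G -> p.1 < p.2) (is_graph G).
Proof.
apply: (iffP forallP) => [Glt p pG | Glt p]; first exact: (Glt [` pG]).
exact: Glt (fsvalP p).
Qed.

Lemma is_graphS G H : is_graph G -> H `<=` G -> is_graph H.
Proof. by move=> /is_graphP Glt /fsubsetP HG; apply/is_graphP => p /HG /Glt. Qed.

Lemma vertsP G v : reflect (exists2 p, p \in G & incident v p) (v \in verts G).
Proof.
rewrite /verts in_fsetU; apply: (iffP orP).
- by case=> /imfsetP [p /= pG ->]; exists p; rewrite // /incident eqxx ?orbT.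
- by case=> p pG /orP [/eqP <- | /eqP <-]; [left | right]; apply/imfsetP; exists p.
Qed.

Lemma verts1 G p : p \in G -> p.1 \in verts G.
Proof. by move=> pG; apply/vertsP; exists p; rewrite // /incident eqxx. Qed.

Lemma verts2 G p : p \in G -> p.2 \in verts G.
Proof. by move=> pG; apply/vertsP; exists p; rewrite // /incident eqxx orbT. Qed.

Lemma mk_edge_lt a b : a < b -> mk_edge a b = (a, b).
Proof. by move=> ab; rewrite /mk_edge (minn_idPl (ltnW ab)) (maxn_idPr (ltnW ab)). Qed.

Lemma mk_edgeC a b : mk_edge a b = mk_edge b a.
Proof. by rewrite /mk_edge minnC maxnC. Qed.

Lemma mk_edge_eq a b a' b' : mk_edge a b = mk_edge a' b' ->
  (a = a' /\ b = b') \/ (a = b' /\ b = a').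
Proof. by rewrite /mk_edge; case; lia. Qed.

Lemma mk_edge_inj a a' b : mk_edge a b = mk_edge a' b -> a = a'.
Proof. by move/mk_edge_eq; lia. Qed.

Lemma mk_edge_relabel (f : nat -> nat) a b :
  mk_edge (f (mk_edge a b).1) (f (mk_edge a b).2) = mk_edge (f a) (f b).
Proof. by rewrite [mk_edge a b]/mk_edge /=; case: (leqP a b) => // _; rewrite mk_edgeC. Qed.

Lemma incident_mk_edge v a b : incident v (mk_edge a b) = (a == v) || (b == v).
Proof. by rewrite /incident /mk_edge /=; case: (leqP a b) => _; rewrite // orbC. Qed.

Lemma nbrsE G u v : (u \in nbrs G v) = (u \in verts G) && (mk_edge u v \in G).
Proof. by rewrite inE. Qed.

Lemma incident_edgeP G v p : is_graph G -> p \in G -> incident v p ->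
  exists2 u, u \in nbrs G v & p = mk_edge u v.
Proof.
move=> /is_graphP Glt pG; have := Glt p pG; rewrite /incident.
case: p pG => a b /= pG ab /orP [/eqP av | /eqP bv]; subst v.
  by exists b; rewrite ?nbrsE mk_edgeC mk_edge_lt // pG (verts2 pG).
by exists a; rewrite ?nbrsE mk_edge_lt // pG (verts1 pG).
Qed.

Lemma incident_edges G v : is_graph G ->
  [fset p in G | incident v p] = [fset mk_edge u v | u in nbrs G v].
Proof.
move=> gG; apply/fsetP => p; rewrite inE; apply/andP/imfsetP => [[pG pv] | [u /=]].
  by have [u uv ->] := incident_edgeP gG pG pv; exists u.
by rewrite nbrsE => /andP[_ uvG] ->; rewrite incident_mk_edge eqxx orbT.
Qed.

Lemma deg_nbrs G v : is_graph G -> deg G v = #|` nbrs G v|.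
Proof.
move=> gG; rewrite /deg incident_edges //.
by apply/eqP/card_in_imfsetP => u w _ _; apply: mk_edge_inj.
Qed.

Lemma nbrs_subset G v : is_graph G -> nbrs G v `<=` verts G `\ v.
Proof.
move=> /is_graphP Glt; apply/fsubsetP => u; rewrite nbrsE => /andP[uG uvG].
rewrite in_fsetD1 uG andbT; apply/eqP => uv; subst u.
by have := Glt _ uvG; rewrite /mk_edge minnn maxnn ltnn.
Qed.

Lemma deg_lt_card_verts G v : is_graph G -> v \in verts G -> deg G v < #|` verts G|.
Proof.
move=> gG vG; rewrite deg_nbrs // [#|` verts G|](cardfsD1 v) vG add1n ltnS.
exact/fsubset_leq_card/nbrs_subset.
Qed.

Lemma in_Kn n p : (p \in Kn n) = (p.1 < p.2) && (p.2 < n).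
Proof.
case: p => a b; rewrite /Kn !inE /=.
apply/andP/andP => [[/allpairsP [[i j] [/= + + [-> ->]]] ij] | [ab bn]].
  by rewrite !mem_iota => /andP[_ ?] /andP[_ ?].
by split=> //; apply/allpairsP; exists (a, b); rewrite /= !mem_iota; split=> //; lia.
Qed.

Lemma is_graph_Kn n : is_graph (Kn n).
Proof. by apply/is_graphP => p; rewrite in_Kn => /andP[]. Qed.

Lemma Kn_subset m n : m <= n -> Kn m `<=` Kn n.
Proof. by move=> mn; apply/fsubsetP => p; rewrite !in_Kn => /andP[-> /leq_trans->]. Qed.

Lemma mk_edge_Kn n a b : a != b -> a < n -> b < n -> mk_edge a b \in Kn n.
Proof. by rewrite in_Kn /mk_edge /= => /eqP; lia. Qed.

Lemma map_graphS f A B : A `<=` B -> map_graph f A `<=` map_graph f B.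
Proof.
move=> /fsubsetP AB; apply/fsubsetP => q /imfsetP [p /= pA ->].
by apply/imfsetP; exists p => //; apply: AB.
Qed.

Lemma card_map_graph G f B : is_graph G -> {in verts G &, injective f} -> B `<=` G ->
  #|` map_graph f B| = #|` B|.
Proof.
move=> /is_graphP Glt finj /fsubsetP BG; apply/eqP/card_in_imfsetP => p q /BG pG /BG qG.
have [p12 q12] := (Glt p pG, Glt q qG).
case/mk_edge_eq => -[/finj e1 /finj e2].
  rewrite [p]surjective_pairing [q]surjective_pairing.
  by rewrite (e1 (verts1 pG) (verts1 qG)) (e2 (verts2 pG) (verts2 qG)).
move: p12; rewrite (e1 (verts1 pG) (verts2 qG)) (e2 (verts2 pG) (verts1 qG)).
by rewrite ltnNge (ltnW q12).
Qed.

Lemma relabel_edge_neq G (f : nat -> nat) p :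
  is_graph G -> {in verts G &, injective f} -> p \in G -> f p.1 != f p.2.
Proof.
move=> /is_graphP Glt finj pG; apply/eqP => /finj.
by rewrite verts1 // verts2 // => /(_ isT isT) p12; have := Glt p pG; rewrite p12 ltnn.
Qed.

Lemma relabel (V : {fset nat}) (s T : seq nat) :
  uniq s -> {subset s <= V} -> uniq T -> #|` V| <= size T ->
  exists f : nat -> nat, [/\ {in V &, injective f}, {in V, forall v, f v \in T} &
    forall i, i < size s -> f (nth 0 s i) = nth 0 T i].
Proof.
move=> s_uniq sV T_uniq VT; set L := s ++ enum_fset (V `\` [fset x in s]).
have L_uniq : uniq L.
  rewrite cat_uniq s_uniq fset_uniq andbT /=.
  by apply/hasPn => x; rewrite in_fsetD inE => /andP[].
have LV : L =i V.
  move=> x; rewrite mem_cat in_fsetD inE.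
  by case: (boolP (x \in s)) => [/sV -> | _] //=; rewrite orbF.
have idxT v : v \in V -> index v L < size T.
  move=> vV; apply: leq_trans VT; rewrite -(perm_size (uniq_perm L_uniq (fset_uniq V) LV)).
  by rewrite index_mem LV.
exists (fun v => nth 0 T (index v L)); split.
- move=> u v uV vV /eqP; rewrite nth_uniq ?idxT // => /eqP /index_inj.
  by rewrite !LV => ->.
- by move=> v vV; rewrite mem_nth ?idxT.
- by move=> i si; rewrite index_cat mem_nth // index_uniq.
Qed.

Lemma card_fset_sep (X : {fset edge}) (P : pred edge) :
  #|` [fset p in X | P p]| = \sum_(p <- X) P p.
Proof.
rewrite card_fset_sum1 -big_fset_condE big_mkcond /=.
by apply: eq_bigr => p _; case: (P p).
Qed.

Lemma sum_fset_const (W : {fset nat}) k : \sum_(w <- W) k = #|` W| * k.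
Proof. by rewrite card_fset_sum1 big_distrl /=; apply: eq_bigr => *; rewrite mul1n. Qed.

Lemma sum_deg (W : {fset nat}) (X : {fset edge}) :
  \sum_(v <- W) deg X v = \sum_(p <- X) \sum_(v <- W) incident v p.
Proof. by under eq_bigr => v _ do rewrite /deg card_fset_sep; exact: exchange_big. Qed.

Lemma sum_incident_le (W : {fset nat}) a b :
  \sum_(v <- W) ((a == v) || (b == v)) <= (a \in W) + (b \in W).
Proof.
have sum_eq_mem c : \sum_(v <- W) (c == v) = (c \in W).
  rewrite -(count_uniq_mem c (fset_uniq W)) -sum1_count [RHS]big_mkcond /=.
  by apply: eq_bigr => v _; rewrite eq_sym; case: (v == c).
rewrite -!sum_eq_mem -big_split /=; apply: leq_sum => v _.
by case: (a == v); case: (b == v).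
Qed.

(* Every edge has at most two ends in W. *)
Lemma sum_deg_fsubset_le (W : {fset nat}) (F B : {fset edge}) : F `<=` B ->
  (forall p, p \in F -> \sum_(v <- W) incident v p <= 1) ->
  \sum_(v <- W) deg B v + \sum_(v <- W) deg F v <= 2 * #|` B|.
Proof.
move=> FB F1; rewrite !sum_deg.
have -> : \sum_(p <- F) \sum_(v <- W) incident v p =
          \sum_(p <- B) (p \in F) * \sum_(v <- W) incident v p.
  rewrite -(big_fset_incl _ FB) => [|p _ /negbTE -> //].
  by apply: eq_big_seq => p ->; rewrite mul1n.
rewrite -big_split mulnC card_fset_sum1 big_distrl /=; apply: leq_sum => p _.
have le2 : \sum_(v <- W) incident v p <= 2.
  exact: leq_trans (sum_incident_le W p.1 p.2) (leq_add (leq_b1 _) (leq_b1 _)).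
case: (boolP (p \in F)) => pF; rewrite ?mul1n ?mul0n ?addn0 //.
by have le1 := F1 p pF; apply: (leq_add le1 le1).
Qed.

Definition star_forest (W : {fset nat}) (d : nat) (F : {fset edge}) : Prop :=
  (forall w, w \in W -> deg F w = d) /\
  (forall p, p \in F -> exists2 w, w \in W & exists2 x, x \notin W & p = mk_edge x w).

Lemma exists_star_forest G d U : is_graph G -> dominating G d U ->
  exists2 F, F `<=` G & star_forest (verts G `\` U) d F.
Proof.
move=> gG [_ Udom]; set W := verts G `\` U.
pose P w := [fset x in take d (nbrs G w `&` U)].
have PG w x : x \in P w -> mk_edge x w \in G /\ x \notin W.
  by rewrite inE => /mem_take; rewrite in_fsetI nbrsE in_fsetD => /andP[/andP[_ ->] ->].
have cardP w : w \in W -> #|` P w| = d.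
  move=> /fsetDP [wG wU]; rewrite card_fseq undup_id ?take_uniq ?fset_uniq //.
  by rewrite size_takel ?Udom.
pose F := \bigcup_(w <- W) [fset mk_edge x w | x in P w].
have FP p : p \in F -> exists2 w, w \in W & exists2 x, x \in P w & p = mk_edge x w.
  by case/bigfcupP => w /andP[wW _] /imfsetP [x /= xP ->]; exists w => //; exists x.
exists F; first by apply/fsubsetP => p /FP [w _ [x /PG [xwG _] ->]].
split; last by move=> p /FP [w wW [x /PG [_ xW] ->]]; exists w => //; exists x.
move=> w wW; rewrite /deg -(cardP w wW).
have -> : [fset p in F | incident w p] = [fset mk_edge x w | x in P w].
  apply/fsetP => p; rewrite inE.
  apply/andP/imfsetP => [[/FP [w' w'W [x xP ->]]] | [x /= xP ->]].
    rewrite incident_mk_edge => /orP[/eqP xw | /eqP <-]; last by exists x.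
    by have [_] := PG _ _ xP; rewrite xw wW.
  split; last by rewrite incident_mk_edge eqxx orbT.
  by apply/bigfcupP; exists w; rewrite ?wW //; apply/imfsetP; exists x.
by apply/eqP/card_in_imfsetP => x y _ _; apply: mk_edge_inj.
Qed.

Lemma star_degree_count (W : {fset nat}) (F B : {fset edge}) d : F `<=` B ->
  star_forest W d F -> (forall w, w \in W -> d < deg B w) ->
  #|` W| * (2 * d + 1) <= 2 * #|` B|.
Proof.
move=> FB [degF Fstar] degB.
have F1 p : p \in F -> \sum_(v <- W) incident v p <= 1.
  move=> /Fstar [w wW [x xW ->]]; under eq_bigr => v _ do rewrite incident_mk_edge.
  by apply: leq_trans (sum_incident_le W x w) _; rewrite (negbTE xW) wW.
apply: leq_trans _ (sum_deg_fsubset_le FB F1).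
have -> : (2 * d + 1 = d.+1 + d)%N by rewrite addn1 mul2n -addnn addSn.
rewrite mulnDr -!sum_fset_const !big_seq leq_add //; first exact: leq_sum.
by apply/eq_leq/eq_bigr => w /degF.
Qed.

Lemma mindeg_exists G w : w \in verts G -> exists2 k, is_mindeg G k & k <= deg G w.
Proof.
move=> wG; pose P k := [exists v : verts G, deg G (val v) == k].
have Pw : P (deg G w) by apply/existsP; exists [` wG].
have [k /existsP [v /eqP vk] kmin] := ex_minnP (ex_intro P _ Pw).
exists k; last exact: kmin.
split; first by exists (val v); rewrite ?fsvalP.
by move=> u uG; apply: kmin; apply/existsP; exists [` uG].
Qed.

Definition fan (d m : nat) : {fset edge} := [fset mk_edge i m | i in iota 0 d].

Lemma card_fan d m : #|` fan d m| <= d.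
Proof.
by apply: leq_trans (leq_imfset_card _ _ _) _; rewrite /= undup_id ?iota_uniq ?size_iota.
Qed.

Lemma fan_subset d m : d <= m -> fan d m `<=` Kn m.+1.
Proof.
move=> dm; apply/fsubsetP => p /imfsetP [i /=]; rewrite mem_iota => /andP[_ id] ->.
by rewrite mk_edge_Kn //; rewrite ?neq_ltn; lia.
Qed.

Lemma Kn_succ_fan_compl d m e : e \in Kn m.+1 `\` (Kn m `|` fan d m) ->
  exists2 a, d <= a < m & e = mk_edge a m.
Proof.
case: e => a b /fsetDP []; rewrite in_Kn in_fsetU in_Kn negb_or /= => /andP[ab bm] /andP[].
rewrite ab /= -leqNgt => mb; have bm' : b = m by apply/eqP; rewrite eqn_leq mb -ltnS bm.
subst b => nfan; exists a; last by rewrite mk_edge_lt.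
rewrite ab andbT leqNgt; apply: contra nfan => ad.
by apply/imfsetP; exists a; rewrite ?mk_edge_lt // mem_iota.
Qed.

(* relabel with T = m :: [seq sw i | i <- iota 0 m], where sw swaps d and y. *)
Lemma relabel_apex (V : {fset nat}) c (s : seq nat) d m y :
  uniq (c :: s) -> {subset c :: s <= V} -> size s = d.+1 -> #|` V| <= m.+1 ->
  d <= y < m ->
  exists f : nat -> nat, [/\ {in V &, injective f}, f c = m,
    {in V, forall v, v != c -> f v < m} &
    forall j, j <= d -> f (nth 0 s j) = if j == d then y else j].
Proof.
move=> s_uniq sV size_s Vm /andP[dy ym].
pose sw i := if i == d then y else if i == y then d else i.
have swK : involutive sw.
  by move=> i; rewrite /sw; do !case: eqP => //=; lia.
have sw_lt i : i < m -> sw i < m by rewrite /sw; do !case: eqP => //=; lia.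
set T := m :: map sw (iota 0 m).
have T_uniq : uniq T.
  rewrite /= (map_inj_uniq (can_inj swK)) iota_uniq andbT.
  apply/negP => /mapP [i]; rewrite mem_iota => /andP[_ /sw_lt lt_i_m] mE.
  by rewrite -mE ltnn in lt_i_m.
have VT : #|` V| <= size T by rewrite /= size_map size_iota.
have [f [finj fT fs]] := relabel s_uniq sV T_uniq VT.
have fc : f c = m := fs 0 isT.
exists f; split=> // [v vV vc | j jd].
  have := fT v vV; rewrite inE => /orP[/eqP fv | /mapP [i]].
    by move: vc; rewrite -(finj _ _ vV (sV c (mem_head _ _))) ?fv ?fc ?eqxx.
  by rewrite mem_iota => /andP[_ /sw_lt] + ->.
have := fs j.+1; rewrite /= size_s ltnS => /(_ jd) ->.
rewrite (nth_map 0) ?size_iota ?nth_iota ?add0n /sw; try lia.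
by case: (j =P d) => // /eqP jd'; case: ifP => // /eqP; lia.
Qed.

Lemma embed_apex G c d m y : is_graph G -> c \in verts G -> deg G c = d.+1 ->
  #|` verts G| <= m.+1 -> d <= y < m ->
  exists f, exists2 x0, mk_edge x0 c \in G &
    [/\ {in verts G &, injective f}, f x0 = y, f c = m &
        map_graph f G `<=` mk_edge y m |` (Kn m `|` fan d m)].
Proof.
move=> gG cG degc Vm dym; set s := enum_fset (nbrs G c).
have size_s : size s = d.+1 by rewrite -degc deg_nbrs.
have s_uniq : uniq (c :: s).
  rewrite /= fset_uniq andbT; apply/negP => /(fsubsetP (nbrs_subset c gG)).
  by rewrite in_fsetD1 eqxx.
have sV : {subset c :: s <= verts G}.
  by move=> v; rewrite inE => /orP[/eqP -> // | /(fsubsetP (nbrs_subset c gG))/fsetD1P[]].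
have [f [finj fc f_lt fs]] := relabel_apex s_uniq sV size_s Vm dym.
have x0c : nth 0 s d \in nbrs G c by rewrite mem_nth // size_s.
exists f, (nth 0 s d); first by move: x0c; rewrite nbrsE => /andP[].
split=> //; first by rewrite fs // eqxx.
apply/fsubsetP => q /imfsetP [p /= pG ->]; rewrite in_fset1U in_fsetU.
case: (boolP (incident c p)) => pc.
  have [u uc ->] := incident_edgeP gG pG pc; rewrite mk_edge_relabel fc.
  have jd : index u s <= d by rewrite -ltnS -size_s index_mem.
  rewrite -(nth_index 0 uc) fs //.
  case: (index u s =P d) => [_ | /eqP jd']; first by rewrite eqxx.
  apply/orP; right; apply/orP; right; apply/imfsetP; exists (index u s) => //.
  by rewrite mem_iota; lia.
move: pc; rewrite /incident negb_or => /andP[p1c p2c].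
by rewrite mk_edge_Kn ?orbT ?(relabel_edge_neq gG) ?f_lt ?verts1 ?verts2 // eq_sym.
Qed.

Section GraphMatroidFamily.
Variable M : graph -> {fset edge} -> bool.
Hypothesis famM : graph_matroid_family M.

Lemma family_matroid G : is_graph G -> is_matroid G (M G).
Proof. by case: famM => matM _ _; apply: matM. Qed.

Lemma family_restrict G H F : is_graph G -> H `<=` G -> M H F = M G F && (F `<=` H).
Proof. by move=> gG HG; case: famM => _ _ resM; apply: resM. Qed.

Lemma family_relabel G f F : is_graph G -> {in verts G &, injective f} -> F `<=` G ->
  M (map_graph f G) (map_graph f F) = M G F.
Proof. by move=> gG finj; case: famM => _ isoM _; apply: isoM. Qed.

Lemma indep_superset G H F : is_graph G -> H `<=` G -> M H F -> M G F.
Proof. by move=> gG HG; rewrite (family_restrict _ gG HG) => /andP[]. Qed.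

Lemma indep_subset G H F : is_graph G -> H `<=` G -> F `<=` H -> M G F -> M H F.
Proof. by move=> gG HG FH; rewrite (family_restrict _ gG HG) FH andbT. Qed.

Lemma rank_subset G H : is_graph G -> H `<=` G -> rank M H = mrank (M G) H.
Proof.
move=> gG HG; rewrite /rank /mrank big_seq_cond [RHS]big_seq_cond.
apply: eq_bigl => F; rewrite fpowersetE; case: (boolP (F `<=` H)) => //= FH.
by rewrite (family_restrict _ gG HG) FH andbT.
Qed.

Lemma rank_ge G F : M G F -> F `<=` G -> #|` F| <= rank M G.
Proof. exact: mrank_ge. Qed.

Lemma indep_full G : is_graph G -> rank M G = #|` G| -> M G G.
Proof.
move=> gG rG; have [B [iB BG cB]] := mrank_basis (family_matroid gG) G.
suff BGe : B = G by rewrite -{2}BGe.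
have rG' : mrank (M G) G = #|` G| := rG.
by apply/eqP; rewrite -(fsubset_leqif_cards BG).2 cB rG'.
Qed.

Lemma circuit_dep C : is_circuit M C -> ~~ M C C.
Proof.
by case=> _ rC _; apply/negP => iC; have := rank_ge iC (fsubset_refl C); rewrite leqNgt rC.
Qed.

Lemma circuitD1_indep C e : is_circuit M C -> e \in C -> M C (C `\ e).
Proof.
case=> gC _ rCe eC; have gCe := is_graphS gC (fsubD1set C e).
apply: indep_superset gC (fsubD1set C e) (indep_full gCe _).
by rewrite rCe // [#|` C|](cardfsD1 e C) eC add1n subn1.
Qed.

Lemma relabel_circuit C H f e : is_circuit M C -> is_graph H ->
  {in verts C &, injective f} -> map_graph f C `<=` H -> e \in C ->
  ~~ M H (map_graph f C) /\ M H (map_graph f C `\ mk_edge (f e.1) (f e.2)).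
Proof.
move=> circC gH finj CH eC; have gC : is_graph C by case: circC.
split.
  apply/negP => /(indep_subset gH CH (fsubset_refl _)).
  by rewrite family_relabel // ?fsubset_refl //; apply/negP/circuit_dep.
have iCe : M H (map_graph f (C `\ e)).
  apply: indep_superset gH CH _; rewrite family_relabel ?fsubD1set //.
  exact: circuitD1_indep.
apply: (indepS (family_matroid gH) iCe).
apply/fsubsetP => q /fsetD1P [qe /imfsetP [p /= pC qE]].
apply/imfsetP; exists p => //=; apply/fsetD1P; split=> //.
by apply: contraNneq qe => pe; rewrite qE pe.
Qed.

Lemma rank_le_rank_Kn G : is_graph G -> rank M G <= rank M (Kn #|` verts G|).
Proof.
move=> gG; set n := #|` verts G|.
have nil_sub : {subset [::] <= verts G} by [].
have n_le : n <= size (iota 0 n) by rewrite size_iota.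
have [f [finj fV _]] := relabel (isT : uniq [::]) nil_sub (iota_uniq 0 n) n_le.
have fn v : v \in verts G -> f v < n by move/fV; rewrite mem_iota.
have GKn : map_graph f G `<=` Kn n.
  apply/fsubsetP => q /imfsetP [p /= pG ->].
  by rewrite mk_edge_Kn ?(relabel_edge_neq gG) ?fn ?verts1 ?verts2.
have [B [iB BG cB]] := mrank_basis (family_matroid gG) G.
have -> : rank M G = #|` map_graph f B| by rewrite (card_map_graph gG finj BG) cB.
apply: rank_ge; last exact: fsubset_trans (map_graphS f BG) GKn.
by apply: indep_superset (is_graph_Kn n) GKn _; rewrite family_relabel.
Qed.

(* The edges of K_(m+1) outside K_m and the fan at m are the (y, m) with
   d <= y < m; each closes a relabelled copy of the threshold circuit. *)
Lemma rank_Kn_succ C c d t m : is_circuit M C -> c \in verts C -> deg C c = d.+1 ->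
  #|` verts C| = t.+1 -> t <= m -> d < m -> rank M (Kn m.+1) <= rank M (Kn m) + d.
Proof.
move=> circC cC degc cardC tm dm; have gC : is_graph C by case: circC.
have gK := is_graph_Kn m.+1; have matK := family_matroid gK.
have YK : Kn m `|` fan d m `<=` Kn m.+1 by rewrite fsubUset Kn_subset // fan_subset // ltnW.
have span : mrank (M (Kn m.+1)) (Kn m.+1) <= mrank (M (Kn m.+1)) (Kn m `|` fan d m).
  apply: (mrank_le_span matK YK) => _ /Kn_succ_fan_compl [a ya ->].
  have Cm : #|` verts C| <= m.+1 by rewrite cardC.
  have [f [x0 x0c [finj fx0 fc CK]]] := embed_apex gC cC degc Cm ya.
  have eYK : mk_edge a m |` (Kn m `|` fan d m) `<=` Kn m.+1.
    by case/andP: ya => _ am; rewrite fsubUset fsub1set YK mk_edge_Kn ?neq_ltn ?am // ltnW.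
  have CKm : map_graph f C `<=` Kn m.+1 := fsubset_trans CK eYK.
  have [nZ iZe] := relabel_circuit circC gK finj CKm x0c.
  by rewrite mk_edge_relabel fx0 fc in iZe; exists (map_graph f C).
apply: leq_trans span _; rewrite (rank_subset gK (Kn_subset (leqnSn m))).
exact: leq_trans (mrankU_le matK _ _) (leq_add (leqnn _) (card_fan d m)).
Qed.

Lemma rank_Kn_le C c d t n : is_circuit M C -> c \in verts C -> deg C c = d.+1 ->
  #|` verts C| = t.+1 -> t <= n -> rank M (Kn n) <= rank M (Kn t) + d * (n - t).
Proof.
move=> circC cC degc cardC; have gC : is_graph C by case: circC.
have dt : d < t by have := deg_lt_card_verts gC cC; rewrite degc cardC ltnS.
elim: n => [|n IH]; first by rewrite leqn0 => /eqP ->; rewrite subnn muln0 addn0.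
rewrite leq_eqVlt => /orP[/eqP <- | tn]; first by rewrite subnn muln0 addn0.
apply: leq_trans (rank_Kn_succ circC cC degc cardC tn (leq_trans dt tn)) _.
by rewrite subSn // mulnSr addnA leq_add2r IH.
Qed.

Lemma rank_le_threshold d t G : is_threshold M d t -> is_graph G -> t <= #|` verts G| ->
  rank M G <= rank M (Kn t) + d * (#|` verts G| - t).
Proof.
move=> [[C [circC [[c cC degc] _]] cardC] _] gG tG.
exact: leq_trans (rank_le_rank_Kn gG) (rank_Kn_le circC cC degc cardC tG).
Qed.

Lemma minimal_dep_circuit G Z : is_graph G -> Z `<=` G -> ~~ M G Z ->
  (forall e, e \in Z -> M G (Z `\ e)) -> is_circuit M Z.
Proof.
move=> gG ZG nZ Zmin; have gZ := is_graphS gG ZG; split=> //.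
  rewrite ltn_neqAle mrank_le_card andbT; apply: contra nZ => /eqP rZ.
  exact: indep_superset gG ZG (indep_full gZ rZ).
move=> e eZ; have ZeG := fsubset_trans (fsubD1set Z e) ZG.
have iZe := indep_subset gG ZeG (fsubset_refl _) (Zmin e eZ).
apply/eqP; rewrite [#|` Z|](cardfsD1 e) eZ add1n subn1 eqn_leq mrank_le_card.
exact: rank_ge iZe (fsubset_refl _).
Qed.

Lemma dep_has_circuit G F : is_graph G -> F `<=` G -> ~~ M G F ->
  exists2 Z, Z `<=` F & is_circuit M Z.
Proof.
move=> gG; have [n] := ubnP #|` F|; elim: n F => // n IH F ltFn FG nF.
case: (boolP [forall e : F, M G (F `\ val e)]) => [/forallP Fmin | /forallPn [[e eF] /= nFe]].
  by exists F => //; apply: minimal_dep_circuit nF _ => // e eF; apply: (Fmin [` eF]).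
have ltFe : #|` F `\ e| < n by move: ltFn; rewrite [#|` F|](cardfsD1 e) eF.
have [Z ZFe circZ] := IH (F `\ e) ltFe (fsubset_trans (fsubD1set F e) FG) nFe.
by exists Z => //; apply: fsubset_trans ZFe (fsubD1set F e).
Qed.

Lemma indep_low_degree d G F : is_dimensionality M d -> is_graph G -> F `<=` G ->
  (forall p, p \in F -> exists2 w, incident w p & deg F w <= d) -> M G F.
Proof.
move=> [_ dimM] gG FG low; apply/negPn/negP => /(dep_has_circuit gG FG) [Z ZF circZ].
have [p pZ] : exists p, p \in Z.
  by apply/fset0Pn; rewrite -cardfs_gt0; case: circZ => _ /(leq_ltn_trans (leq0n _)).
have [w wp Fw] := low p (fsubsetP ZF p pZ).
have [k Zk kw] := mindeg_exists (introT (vertsP _ _) (ex_intro2 _ _ p pZ wp)).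
have ZFw : deg Z w <= deg F w.
  by apply: fsubset_leq_card; apply/fsubsetP => q; rewrite !inE => /andP[/(fsubsetP ZF) -> ->].
by have := leq_trans (dimM _ _ circZ Zk) (leq_trans kw (leq_trans ZFw Fw)); rewrite ltnn.
Qed.

Lemma deg_basis_gt G B w d : is_graph G -> M G B -> B `<=` G -> #|` B| = rank M G ->
  rank M (del_vertex G w) + d < rank M G -> d < deg B w.
Proof.
move=> gG iB BG cB drop; set Bw := [fset p in B | incident w p].
have BwB : Bw `<=` B by apply/fsubsetP => p; rewrite inE => /andP[].
have delG : del_vertex G w `<=` G by apply/fsubsetP => p; rewrite inE => /andP[].
have BGw : B `\` Bw `<=` del_vertex G w.
  by apply/fsubsetP => p /fsetDP [pB]; rewrite !inE pB (fsubsetP BG p pB).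
have iBGw := indep_subset gG delG BGw (indepS (family_matroid gG) iB (fsubsetDl B Bw)).
have := rank_ge iBGw BGw; rewrite cardfsDS // cB.
rewrite /deg -/Bw; move: drop; lia.
Qed.

Lemma star_forest_indep d G W F : is_dimensionality M d -> is_graph G -> F `<=` G ->
  star_forest W d F -> M G F.
Proof.
move=> dimM gG FG [degF Fstar]; apply: (indep_low_degree dimM gG FG).
by move=> p /Fstar [w wW [x _ ->]]; exists w; rewrite ?degF // incident_mk_edge eqxx orbT.
Qed.

End GraphMatroidFamily.

(* With r0 = rt - d t, the count gives (2d+1)(n - u) <= 2 r0 + 2 d n, i.e.
   n <= (2d+1) u + 2 r0 <= n/2 + n/3. *)
Lemma rank_count_absurd (d t n u w b rt delta : nat) : 0 < d -> (w + u = n)%N ->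
  6 * d * u <= n -> w * (2 * d + 1) <= 2 * b -> b <= rt + d * (n - t) ->
  (6%:Z * (rt%:Z - (d * t)%:Z) <= delta%:Z)%R -> delta < n -> t <= n -> False.
Proof. by move=> *; nia. Qed.

Theorem lemma3p20 (M : graph -> {fset edge} -> bool) (d t delta : nat) :
  graph_matroid_family M -> nontrivial M -> unbounded M ->
  is_dimensionality M d -> is_threshold M d t ->
  (0 < d)%N ->
  (0 < delta)%N -> (t <= delta)%N ->
  (* delta >= 6 r_0 with r_0 = r(K_t) - d t *)
  (6%:Z * ((rank M (Kn t))%:Z - (d * t)%:Z) <= delta%:Z)%R ->
  (* every graph of min degree >= delta has a d-dominating set of size
     at most eps |V(G)|, eps = 1/(6d) *)
  (forall H, is_graph H -> mindeg_ge H delta ->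
     exists U, dominating H d U /\ (6 * d * #|` U| <= #|` verts H|)%N) ->
  forall G, is_graph G -> G != fset0 -> mindeg_ge G delta ->
  exists2 v0, v0 \in verts G & (rank M G <= rank M (del_vertex G v0) + d)%N.
Proof.
move=> famM _ _ dimM thrM d_gt0 _ t_delta r0_delta dom G gG G0 G_delta.
case: (boolP [exists v : verts G, rank M G <= rank M (del_vertex G (val v)) + d]).
  by case/existsP => v; exists (val v); rewrite ?fsvalP.
move/existsPn => drop; exfalso.
have [v0 v0G] : exists v, v \in verts G by case/fset0Pn: G0 => p /verts1; exists p.1.
have delta_n := leq_ltn_trans (G_delta v0 v0G) (deg_lt_card_verts gG v0G).
have tG : t <= #|` verts G| := leq_trans t_delta (ltnW delta_n).
have [U [Udom U_small]] := dom G gG G_delta.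
have [F FG starF] := exists_star_forest gG Udom.
have iF := star_forest_indep famM dimM gG FG starF.
have [B [FB iB BG cB]] := indep_extend (family_matroid famM gG) iF FG.
have degB w : w \in verts G `\` U -> d < deg B w.
  case/fsetDP => wG _; apply: (deg_basis_gt famM gG iB BG cB).
  by rewrite ltnNge; apply: (drop [` wG]).
have WU : (#|` verts G `\` U| + #|` U| = #|` verts G|)%N.
  by case: Udom => UG _; rewrite cardfsDS // subnK // fsubset_leq_card.
apply: (rank_count_absurd (b := rank M G) d_gt0 WU U_small _ _ r0_delta delta_n tG).
- have -> : rank M G = #|` B| := esym cB.
  exact: star_degree_count FB starF degB.
- exact: (rank_le_threshold famM thrM gG tG).
Qed.
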